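(* Let $L$ be a 3-dimensional real connected Lie group with the left-invariant almost paracontact metric structure $(\varphi,\xi,\eta,g)$ described in the context, and write $[E_i,E_j]=\sum_k C_{ij}^kE_k$. Then: (1) $L\in\mathbb G_5$ if and only if $[E_1,E_2]=C_{12}^1E_1+C_{12}^2E_2+C_{12}^3E_3$, $[E_1,E_3]=C_{13}^2E_2$, $[E_2,E_3]=C_{13}^2E_1$, with $C_{12}^3\neq0$ (then $\theta_F(\xi)=C_{12}^3$), $C_{12}^1C_{13}^2=0$, $C_{12}^2C_{13}^2=0$; (2) $L\in\mathbb G_6$ if and only if $[E_1,E_2]=C_{12}^1E_1+C_{12}^2E_2$, $[E_1,E_3]=C_{13}^1E_1+C_{13}^2E_2$, $[E_2,E_3]=C_{13}^2E_1+C_{13}^1E_2$, with $C_{13}^1\neq0$ (then $\theta^*_F(\xi)=-2C_{13}^1$), $C_{12}^2C_{13}^2-C_{13}^1C_{12}^1=0$, $C_{12}^1C_{13}^2-C_{13}^1C_{12}^2=0$; (3) $L\in\mathbb G_{10}$ if and only if $[E_1,E_2]=C_{12}^1E_1+C_{12}^2E_2$, $[E_1,E_3]=C_{13}^1E_1+C_{13}^2E_2$, $[E_2,E_3]=C_{23}^1E_1-C_{13}^1E_2$, with ($C_{13}^2\neq C_{23}^1$ or $C_{13}^1\neq0$), $C_{12}^1C_{13}^1+C_{12}^2C_{23}^1=0$, $C_{12}^1C_{13}^2-C_{12}^2C_{13}^1=0$; (4) $L\in\mathbb G_{12}$ if and only if $[E_1,E_2]=C_{12}^1E_1+C_{12}^2E_2$,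 $[E_1,E_3]=C_{13}^2E_2+C_{13}^3E_3$, $[E_2,E_3]=C_{13}^2E_1+C_{23}^3E_3$, with ($C_{13}^3\neq0$ or $C_{23}^3\neq0$), $(C_{12}^1-C_{23}^3)C_{13}^2=0$, $(C_{12}^2+C_{13}^3)C_{13}^2=0$, $(C_{12}^1-C_{23}^3)C_{13}^3+(C_{12}^2+C_{13}^3)C_{23}^3=0$.
   Context: $L$ is a 3-dimensional real connected Lie group with a basis $E_1,E_2,E_3$ of left-invariant vector fields; the structure constants $C_{ij}^k=-C_{ji}^k$ are real. The left-invariant structure is $\varphi E_1=E_2$, $\varphi E_2=E_1$, $\varphi E_3=0$, $\xi=E_3$, $\eta(E_3)=1$, $\eta(E_1)=\eta(E_2)=0$, $g(E_1,E_1)=g(E_3,E_3)=1$, $g(E_2,E_2)=-1$, $g(E_i,E_j)=0$ for $i\neq j$; this is an almost paracontact metric structure ($\varphi^2=\mathrm{id}-\eta\otimes\xi$, $\eta(\xi)=1$, $\varphi\xi=0$, $g(\varphi x,\varphi y)=-g(x,y)+\eta(x)\eta(y)$). The structure tensor is $F(x,y,z)=g((\nabla_x\varphi)y,z)$ with $\nabla$ the Levi-Civita connection of $g$; $\theta_F(x)=\sum_{i,j=1}^{2}g^{ij}F(E_i,E_j,x)$, $\theta^*_F(x)=\sum_{i,j=1}^{2}g^{ij}F(E_i,\varphi E_j,x)$ with $(g^{ij})=\mathrm{diag}(1,-1)$. Classes (conditions for all $x,y,z$, with $n=1$): $\mathbb G_5$: $F(x,y,z)=\frac{\theta_F(\xi)}{2}\{\eta(y)g(\varphi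 x,\varphi z)-\eta(z)g(\varphi x,\varphi y)\}$; $\mathbb G_6$: $F(x,y,z)=-\frac{\theta^*_F(\xi)}{2}\{\eta(y)g(x,\varphi z)-\eta(z)g(x,\varphi y)\}$; $\mathbb G_{10}$: $F(x,y,z)=-\eta(y)F(x,z,\xi)+\eta(z)F(x,y,\xi)$ and $F(x,y,\xi)=F(y,x,\xi)=F(\varphi x,\varphi y,\xi)$; $\mathbb G_{12}$: $F(x,y,z)=\eta(x)\{\eta(y)F(\xi,\xi,z)-\eta(z)F(\xi,\xi,y)\}$. ''$L\in\mathbb G_i$'' means that the structure tensor lies in $\mathbb G_i$ at every point and is not identically zero. *)

From Stdlib Require Import Reals.
Open Scope R_scope.

(* Left-invariant vector fields on the 3-dim Lie group L are identified with
   their coordinates in the basis E_1,E_2,E_3; coordinate index 0,1,2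
   corresponds to E_1,E_2,E_3.  Only the components 0,1,2 are meaningful. *)
Definition vec := nat -> R.

Definition sum3 (f : nat -> R) : R := f 0%nat + f 1%nat + f 2%nat.

(* basis vector E_(i+1) *)
Definition E (i : nat) : vec := fun k => if Nat.eqb k i then 1 else 0.

Definition veq (u v : vec) : Prop := forall k, (k < 3)%nat -> u k = v k.

Definition vadd (u v : vec) : vec := fun k => u k + v k.
Definition vscal (a : R) (u : vec) : vec := fun k => a * u k.

(* Structure constants: C i j k = C_{(i+1)(j+1)}^{(k+1)},
   [E_i, E_j] = sum_k C_ij^k E_k, extended bilinearly. *)
Definition bracket (C : nat -> nat -> nat -> R) (x y : vec) : vec :=
  fun k => sum3 (fun i => sum3 (fun j => x i * y j * C i j k)).

Definition lie_structure (C : nat -> nat -> nat -> R) : Prop :=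
  (forall i j k, (i < 3)%nat -> (j < 3)%nat -> (k < 3)%nat -> C i j k = - C j i k) /\
  (forall x y z : vec,
      veq (vadd (bracket C (bracket C x y) z)
                (vadd (bracket C (bracket C y z) x) (bracket C (bracket C z x) y)))
          (fun _ => 0)).

Definition gdiag (i : nat) : R := match i with 1%nat => -1 | _ => 1 end.
Definition g (x y : vec) : R := sum3 (fun i => gdiag i * x i * y i).

Definition phi (x : vec) : vec :=
  fun k => match k with 0%nat => x 1%nat | 1%nat => x 0%nat | _ => 0 end.
Definition xi : vec := E 2.
Definition eta (x : vec) : R := x 2%nat.

(* Levi-Civita connection of the left-invariant metric g on left-invariant
   fields (Koszul formula):
   2 g(nabla_x y, z) = g([x,y],z) - g([y,z],x) + g([z,x],y). *)
Definition nabla (C : nat -> nat -> nat -> R) (x y : vec) : vec :=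
  fun k => gdiag k * (/2) *
    (g (bracket C x y) (E k) - g (bracket C y (E k)) x + g (bracket C (E k) x) y).

(* structure tensor F(x,y,z) = g((nabla_x phi) y, z) *)
Definition F (C : nat -> nat -> nat -> R) (x y z : vec) : R :=
  g (vadd (nabla C x (phi y)) (vscal (-1) (phi (nabla C x y)))) z.

(* theta_F(x) = sum_{i,j=1}^2 g^{ij} F(E_i,E_j,x),  (g^{ij}) = diag(1,-1) *)
Definition thetaF (C : nat -> nat -> nat -> R) (x : vec) : R :=
  F C (E 0) (E 0) x - F C (E 1) (E 1) x.
Definition thetaStarF (C : nat -> nat -> nat -> R) (x : vec) : R :=
  F C (E 0) (phi (E 0)) x - F C (E 1) (phi (E 1)) x.

Definition F_nonzero (C : nat -> nat -> nat -> R) : Prop :=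
  exists x y z : vec, F C x y z <> 0.

Definition inG5 (C : nat -> nat -> nat -> R) : Prop :=
  (forall x y z : vec,
     F C x y z = thetaF C xi / 2 *
       (eta y * g (phi x) (phi z) - eta z * g (phi x) (phi y))) /\ F_nonzero C.

Definition inG6 (C : nat -> nat -> nat -> R) : Prop :=
  (forall x y z : vec,
     F C x y z = - (thetaStarF C xi / 2) *
       (eta y * g x (phi z) - eta z * g x (phi y))) /\ F_nonzero C.

Definition inG10 (C : nat -> nat -> nat -> R) : Prop :=
  (forall x y z : vec,
     F C x y z = - eta y * F C x z xi + eta z * F C x y xi) /\
  (forall x y : vec,
     F C x y xi = F C y x xi /\ F C x y xi = F C (phi x) (phi y) xi) /\
  F_nonzero C.

Definition inG12 (C : nat -> nat -> nat -> R) : Prop :=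
  (forall x y z : vec,
     F C x y z = eta x * (eta y * F C xi xi z - eta z * F C xi xi y)) /\
  F_nonzero C.

(* 1-based accessors matching the paper's indexing:
   SC C i j k = C_{ij}^k  and  EE i = E_i  (i,j,k in {1,2,3}). *)
Definition SC (C : nat -> nat -> nat -> R) (i j k : nat) : R :=
  C (i - 1)%nat (j - 1)%nat (k - 1)%nat.
Arguments SC C i%_nat j%_nat k%_nat.
Definition EE (i : nat) : vec := E (i - 1)%nat.
Arguments EE i%_nat.

From Stdlib Require Import Reals Lra Lia Classical.
Open Scope R_scope.

(* By the Koszul formula the structure tensor F is a trilinear form whose
   coefficients are linear in the nine structure constants C_ij^k with i < j.
   Evaluating the defining identity of each class on basis vectors cuts the
   class out by linear conditions on these constants; substituted into the
   Jacobi identity, they leave exactly the quadratic side conditions. *)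

Definition skew_symmetric (C : nat -> nat -> nat -> R) : Prop :=
  forall i j k, (i < 3)%nat -> (j < 3)%nat -> (k < 3)%nat -> C i j k = - C j i k.

Section SkewStructureConstants.

Variable C : nat -> nat -> nat -> R.
Hypothesis C_skew : skew_symmetric C.

Lemma bracket_skew (x y : vec) (k : nat) : (k < 3)%nat ->
  bracket C x y k =
    (x 0%nat * y 1%nat - x 1%nat * y 0%nat) * C 0%nat 1%nat k
  + (x 0%nat * y 2%nat - x 2%nat * y 0%nat) * C 0%nat 2%nat k
  + (x 1%nat * y 2%nat - x 2%nat * y 1%nat) * C 1%nat 2%nat k.
Proof.
  intros Hk.
  assert (C_diag : forall i, (i < 3)%nat -> C i i k = 0).
  { intros i Hi. pose proof (C_skew i i k Hi Hi Hk). lra. }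
  unfold bracket, sum3.
  rewrite (C_diag 0%nat), (C_diag 1%nat), (C_diag 2%nat),
    (C_skew 1%nat 0%nat k), (C_skew 2%nat 0%nat k), (C_skew 2%nat 1%nat k) by lia.
  ring.
Qed.

Definition F_poly (x y z : vec) : R :=
  let a := SC C 1 2 1 in let b := SC C 1 2 2 in let c := SC C 1 2 3 in
  let d := SC C 1 3 1 in let e := SC C 1 3 2 in let f := SC C 1 3 3 in
  let p := SC C 2 3 1 in let q := SC C 2 3 2 in let r := SC C 2 3 3 in
  x 0%nat * y 0%nat * z 2%nat * ((e + c - p) / 2) + x 0%nat * y 1%nat * z 2%nat * (- d)
  + x 0%nat * y 2%nat * z 0%nat * ((p - e - c) / 2) + x 0%nat * y 2%nat * z 1%nat * d
  + x 1%nat * y 0%nat * z 2%nat * q + x 1%nat * y 1%nat * z 2%nat * ((e - p - c) / 2)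
  + x 1%nat * y 2%nat * z 0%nat * (- q) + x 1%nat * y 2%nat * z 1%nat * ((p - e + c) / 2)
  + x 2%nat * y 0%nat * z 2%nat * (- r) + x 2%nat * y 1%nat * z 2%nat * (- f)
  + x 2%nat * y 2%nat * z 0%nat * r + x 2%nat * y 2%nat * z 1%nat * f.

Lemma F_expand (x y z : vec) : F C x y z = F_poly x y z.
Proof.
  unfold F, nabla, g, sum3, vadd, vscal, phi.
  rewrite !bracket_skew by lia.
  cbv [F_poly SC Nat.sub E gdiag Nat.eqb].
  field.
Qed.

Ltac expand_F := rewrite ?F_expand; cbv [F_poly E eta g phi gdiag sum3 Nat.eqb xi].
Ltac expand_F_in h := rewrite ?F_expand in h; cbv [F_poly E eta g phi gdiag sum3 Nat.eqb xi] in h.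

Lemma thetaF_xi : thetaF C xi = SC C 1 2 3.
Proof. unfold thetaF. expand_F. field. Qed.

Lemma thetaStarF_xi : thetaStarF C xi = - SC C 1 3 1 - SC C 2 3 2.
Proof. unfold thetaStarF. expand_F. field. Qed.

Lemma F_nonzero_iff : F_nonzero C <->
  ~ (SC C 1 2 3 = 0 /\ SC C 1 3 1 = 0 /\ SC C 1 3 3 = 0 /\
     SC C 2 3 2 = 0 /\ SC C 2 3 3 = 0 /\ SC C 2 3 1 = SC C 1 3 2).
Proof.
  split.
  - intros (x & y & z & Hxyz) (Hc & Hd & Hf & Hq & Hr & Hp). apply Hxyz.
    expand_F. rewrite Hc, Hd, Hf, Hq, Hr, Hp. field.
  - intros Hnz. apply NNPP. intros Hzero. apply Hnz.
    assert (F_zero : forall x y z, F C x y z = 0).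
    { intros x y z. apply NNPP. intros Hxyz. apply Hzero. now exists x, y, z. }
    pose proof (F_zero (E 0%nat) (E 0%nat) (E 2%nat)) as h1.
    pose proof (F_zero (E 0%nat) (E 1%nat) (E 2%nat)) as h2.
    pose proof (F_zero (E 1%nat) (E 0%nat) (E 2%nat)) as h3.
    pose proof (F_zero (E 1%nat) (E 1%nat) (E 2%nat)) as h4.
    pose proof (F_zero (E 2%nat) (E 0%nat) (E 2%nat)) as h5.
    pose proof (F_zero (E 2%nat) (E 1%nat) (E 2%nat)) as h6.
    expand_F_in h1. expand_F_in h2. expand_F_in h3.
    expand_F_in h4. expand_F_in h5. expand_F_in h6.
    repeat split; lra.
Qed.

Lemma inG5_iff : inG5 C <->
  SC C 1 3 1 = 0 /\ SC C 1 3 3 = 0 /\ SC C 2 3 2 = 0 /\ SC C 2 3 3 = 0 /\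
  SC C 2 3 1 = SC C 1 3 2 /\ SC C 1 2 3 <> 0.
Proof.
  unfold inG5. rewrite F_nonzero_iff, thetaF_xi. split.
  - intros [HF Hnz].
    pose proof (HF (E 0%nat) (E 0%nat) (E 2%nat)) as h1.
    pose proof (HF (E 0%nat) (E 1%nat) (E 2%nat)) as h2.
    pose proof (HF (E 1%nat) (E 0%nat) (E 2%nat)) as h3.
    pose proof (HF (E 2%nat) (E 0%nat) (E 2%nat)) as h4.
    pose proof (HF (E 2%nat) (E 1%nat) (E 2%nat)) as h5.
    expand_F_in h1. expand_F_in h2. expand_F_in h3. expand_F_in h4. expand_F_in h5.
    repeat split; lra.
  - intros (Hd & Hf & Hq & Hr & Hp & Hc). split.
    + intros x y z. expand_F. rewrite Hd, Hf, Hq, Hr, Hp. field.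
    + lra.
Qed.

Lemma inG6_iff : inG6 C <->
  SC C 1 2 3 = 0 /\ SC C 1 3 3 = 0 /\ SC C 2 3 3 = 0 /\
  SC C 2 3 1 = SC C 1 3 2 /\ SC C 2 3 2 = SC C 1 3 1 /\ SC C 1 3 1 <> 0.
Proof.
  unfold inG6. rewrite F_nonzero_iff, thetaStarF_xi. split.
  - intros [HF Hnz].
    pose proof (HF (E 0%nat) (E 0%nat) (E 2%nat)) as h1.
    pose proof (HF (E 0%nat) (E 1%nat) (E 2%nat)) as h2.
    pose proof (HF (E 1%nat) (E 1%nat) (E 2%nat)) as h3.
    pose proof (HF (E 2%nat) (E 0%nat) (E 2%nat)) as h4.
    pose proof (HF (E 2%nat) (E 1%nat) (E 2%nat)) as h5.
    expand_F_in h1. expand_F_in h2. expand_F_in h3. expand_F_in h4. expand_F_in h5.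
    repeat split; lra.
  - intros (Hc & Hf & Hr & Hp & Hq & Hd). split.
    + intros x y z. expand_F. rewrite Hc, Hf, Hq, Hr, Hp. field.
    + lra.
Qed.

Lemma inG10_iff : inG10 C <->
  SC C 1 2 3 = 0 /\ SC C 1 3 3 = 0 /\ SC C 2 3 3 = 0 /\ SC C 2 3 2 = - SC C 1 3 1 /\
  (SC C 1 3 2 <> SC C 2 3 1 \/ SC C 1 3 1 <> 0).
Proof.
  unfold inG10. rewrite F_nonzero_iff. split.
  - intros (_ & Hxi & Hnz).
    destruct (Hxi (E 0%nat) (E 0%nat)) as [_ h1].
    destruct (Hxi (E 0%nat) (E 1%nat)) as [h2 _].
    destruct (Hxi (E 0%nat) (E 2%nat)) as [h3 _].
    destruct (Hxi (E 1%nat) (E 2%nat)) as [h4 _].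
    expand_F_in h1. expand_F_in h2. expand_F_in h3. expand_F_in h4.
    repeat split; lra.
  - intros (Hc & Hf & Hr & Hq & Hnz). split; [|split].
    + intros x y z. expand_F. rewrite Hc, Hf, Hq, Hr. field.
    + intros x y. expand_F. rewrite Hc, Hf, Hq, Hr. split; field.
    + lra.
Qed.

Lemma inG12_iff : inG12 C <->
  SC C 1 2 3 = 0 /\ SC C 1 3 1 = 0 /\ SC C 2 3 2 = 0 /\ SC C 2 3 1 = SC C 1 3 2 /\
  (SC C 1 3 3 <> 0 \/ SC C 2 3 3 <> 0).
Proof.
  unfold inG12. rewrite F_nonzero_iff. split.
  - intros [HF Hnz].
    pose proof (HF (E 0%nat) (E 0%nat) (E 2%nat)) as h1.
    pose proof (HF (E 0%nat) (E 1%nat) (E 2%nat)) as h2.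
    pose proof (HF (E 1%nat) (E 0%nat) (E 2%nat)) as h3.
    pose proof (HF (E 1%nat) (E 1%nat) (E 2%nat)) as h4.
    expand_F_in h1. expand_F_in h2. expand_F_in h3. expand_F_in h4.
    repeat split; lra.
  - intros (Hc & Hd & Hq & Hp & Hnz). split.
    + intros x y z. expand_F. rewrite Hc, Hd, Hq, Hp. field.
    + lra.
Qed.

End SkewStructureConstants.

Lemma veq_coords (u v : vec) :
  veq u v <-> u 0%nat = v 0%nat /\ u 1%nat = v 1%nat /\ u 2%nat = v 2%nat.
Proof.
  unfold veq; split.
  - intros H. repeat split; apply H; lia.
  - intros (H0 & H1 & H2) [|[|[|k]]] Hk; easy || lia.
Qed.

Lemma lie_structure_jacobi (C : nat -> nat -> nat -> R) : lie_structure C ->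
  SC C 1 3 3 * SC C 2 3 1 - SC C 1 3 1 * SC C 2 3 3
  + SC C 1 2 2 * SC C 2 3 1 - SC C 1 2 1 * SC C 2 3 2 = 0 /\
  SC C 1 3 3 * SC C 2 3 2 - SC C 1 3 2 * SC C 2 3 3
  - SC C 1 2 2 * SC C 1 3 1 + SC C 1 2 1 * SC C 1 3 2 = 0 /\
  - SC C 1 2 3 * SC C 2 3 2 - SC C 1 2 3 * SC C 1 3 1
  + SC C 1 2 2 * SC C 2 3 3 + SC C 1 2 1 * SC C 1 3 3 = 0.
Proof.
  intros [C_skew C_jacobi].
  pose proof (C_jacobi (E 0%nat) (E 1%nat) (E 2%nat)) as J.
  rewrite veq_coords in J. destruct J as (J0 & J1 & J2).
  unfold vadd in J0, J1, J2. rewrite !(bracket_skew C C_skew) in J0, J1, J2 by lia.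
  cbv [SC Nat.sub E Nat.eqb] in J0, J1, J2 |- *.
  repeat split; lra.
Qed.

Theorem theorem4p1 (C : nat -> nat -> nat -> R) (HC : lie_structure C) :
  (* (1) *)
  ((inG5 C <->
     (veq (bracket C (EE 1) (EE 2))
          (vadd (vscal (SC C 1 2 1) (EE 1))
                (vadd (vscal (SC C 1 2 2) (EE 2)) (vscal (SC C 1 2 3) (EE 3)))) /\
      veq (bracket C (EE 1) (EE 3)) (vscal (SC C 1 3 2) (EE 2)) /\
      veq (bracket C (EE 2) (EE 3)) (vscal (SC C 1 3 2) (EE 1)) /\
      SC C 1 2 3 <> 0 /\
      SC C 1 2 1 * SC C 1 3 2 = 0 /\ SC C 1 2 2 * SC C 1 3 2 = 0)) /\
   (inG5 C -> thetaF C xi = SC C 1 2 3)) /\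
  (* (2) *)
  ((inG6 C <->
     (veq (bracket C (EE 1) (EE 2))
          (vadd (vscal (SC C 1 2 1) (EE 1)) (vscal (SC C 1 2 2) (EE 2))) /\
      veq (bracket C (EE 1) (EE 3))
          (vadd (vscal (SC C 1 3 1) (EE 1)) (vscal (SC C 1 3 2) (EE 2))) /\
      veq (bracket C (EE 2) (EE 3))
          (vadd (vscal (SC C 1 3 2) (EE 1)) (vscal (SC C 1 3 1) (EE 2))) /\
      SC C 1 3 1 <> 0 /\
      SC C 1 2 2 * SC C 1 3 2 - SC C 1 3 1 * SC C 1 2 1 = 0 /\
      SC C 1 2 1 * SC C 1 3 2 - SC C 1 3 1 * SC C 1 2 2 = 0)) /\
   (inG6 C -> thetaStarF C xi = -2 * SC C 1 3 1)) /\
  (* (3) *)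
  (inG10 C <->
     (veq (bracket C (EE 1) (EE 2))
          (vadd (vscal (SC C 1 2 1) (EE 1)) (vscal (SC C 1 2 2) (EE 2))) /\
      veq (bracket C (EE 1) (EE 3))
          (vadd (vscal (SC C 1 3 1) (EE 1)) (vscal (SC C 1 3 2) (EE 2))) /\
      veq (bracket C (EE 2) (EE 3))
          (vadd (vscal (SC C 2 3 1) (EE 1)) (vscal (- SC C 1 3 1) (EE 2))) /\
      (SC C 1 3 2 <> SC C 2 3 1 \/ SC C 1 3 1 <> 0) /\
      SC C 1 2 1 * SC C 1 3 1 + SC C 1 2 2 * SC C 2 3 1 = 0 /\
      SC C 1 2 1 * SC C 1 3 2 - SC C 1 2 2 * SC C 1 3 1 = 0)) /\
  (* (4) *)
  (inG12 C <->
     (veq (bracket C (EE 1) (EE 2))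
          (vadd (vscal (SC C 1 2 1) (EE 1)) (vscal (SC C 1 2 2) (EE 2))) /\
      veq (bracket C (EE 1) (EE 3))
          (vadd (vscal (SC C 1 3 2) (EE 2)) (vscal (SC C 1 3 3) (EE 3))) /\
      veq (bracket C (EE 2) (EE 3))
          (vadd (vscal (SC C 1 3 2) (EE 1)) (vscal (SC C 2 3 3) (EE 3))) /\
      (SC C 1 3 3 <> 0 \/ SC C 2 3 3 <> 0) /\
      (SC C 1 2 1 - SC C 2 3 3) * SC C 1 3 2 = 0 /\
      (SC C 1 2 2 + SC C 1 3 3) * SC C 1 3 2 = 0 /\
      (SC C 1 2 1 - SC C 2 3 3) * SC C 1 3 3 + (SC C 1 2 2 + SC C 1 3 3) * SC C 2 3 3 = 0)).

Proof.
  pose proof HC as [C_skew _].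
  pose proof (lie_structure_jacobi C HC) as (J0 & J1 & J2).
  rewrite (inG5_iff C C_skew), (inG6_iff C C_skew), (inG10_iff C C_skew),
    (inG12_iff C C_skew), (thetaF_xi C C_skew), (thetaStarF_xi C C_skew), !veq_coords.
  cbv [EE Nat.sub]. rewrite !(bracket_skew C C_skew) by lia.
  cbv [SC Nat.sub vadd vscal E Nat.eqb] in J0, J1, J2 |- *.
  revert J0 J1 J2.
  generalize (C 0%nat 1%nat 0%nat) (C 0%nat 1%nat 1%nat) (C 0%nat 1%nat 2%nat)
    (C 0%nat 2%nat 0%nat) (C 0%nat 2%nat 1%nat) (C 0%nat 2%nat 2%nat)
    (C 1%nat 2%nat 0%nat) (C 1%nat 2%nat 1%nat) (C 1%nat 2%nat 2%nat).
  intros a b c d e f p q r J0 J1 J2.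
  intuition (subst; lra).
Qed.
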